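(* $(I(\mathbb N),\tau_{pp})$ is a Polish topological inverse semigroup, and $d=\rho+\rho^\ast$ is a complete metric compatible with $\tau_{pp}$.
   Context: $I(\mathbb N)$ is the set of all bijections $f:A\to B$ with $A,B\subseteq\mathbb N$ (including the empty map), $\mathrm{dom}(f)=A$, $\mathrm{im}(f)=B$, under composition ($\mathrm{dom}(f\circ g)=g^{-1}(\mathrm{dom}(f)\cap\mathrm{im}(g))$) and inversion $f\mapsto f^{-1}$. For $x,y$: $v(x,y)=\{f: x\in\mathrm{dom}(f), f(x)=y\}$, $w_1(x)=\{f: x\notin\mathrm{dom}(f)\}$, $w_2(y)=\{f: y\notin\mathrm{im}(f)\}$; $\tau_{pp}$ is the topology generated by all these sets. For $f,g\in I(\mathbb N)$ and $n\in\mathbb N$ let $a_{(f,g)}(n)=0$ if $n\in\mathrm{dom}(f)\cap\mathrm{dom}(g)$ or $n\notin\mathrm{dom}(f)\cup\mathrm{dom}(g)$, and $1$ otherwise; $b_{(f,g)}(n)=\min\{1,|f(n)-g(n)|\}$ if $n\in\mathrm{dom}(f)\cap\mathrm{dom}(g)$ and $0$ otherwise. $\rho(f,g)=\sum_{n\in\mathbb N}\frac{a_{(f,g)}(n)+b_{(f,g)}(n)}{2^n}$, $\rho^\ast(f,g)=\rho(f^{-1},g^{-1})$. A topological inverse semigroup has continuous multiplication and inversion. *)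

From Stdlib Require Import Reals Lra Lia List ClassicalEpsilon.
From Coquelicot Require Import Coquelicot.
Open Scope R_scope.

(** A partial bijection of N: a partial function (None = undefined)
    that is injective on its domain.  dom f = {n | f n <> None},
    im f = {m | exists n, f n = Some m}. *)
Definition pinj (f : nat -> option nat) : Prop :=
  forall x y z, f x = Some z -> f y = Some z -> x = y.

Definition IN := { f : nat -> option nat | pinj f }.

Definition app (f : IN) (n : nat) : option nat := proj1_sig f n.

Definition in_dom (f : IN) (n : nat) : Prop := app f n <> None.
Definition in_im (f : IN) (m : nat) : Prop := exists n, app f n = Some m.

Definition comp_fun (f g : nat -> option nat) (n : nat) : option nat :=
  match g n with Some m => f m | None => None end.

Lemma comp_pinj f g : pinj f -> pinj g -> pinj (comp_fun f g).
Proof.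
  unfold pinj, comp_fun; intros Hf Hg x y z Hx Hy.
  destruct (g x) as [a|] eqn:Ea; [|discriminate].
  destruct (g y) as [b|] eqn:Eb; [|discriminate].
  assert (a = b) by (eapply Hf; eauto). subst. eapply Hg; eauto.
Qed.

Definition pcomp (f g : IN) : IN :=
  exist _ (comp_fun (proj1_sig f) (proj1_sig g))
          (comp_pinj _ _ (proj2_sig f) (proj2_sig g)).

Definition inv_fun (f : nat -> option nat) (m : nat) : option nat :=
  match excluded_middle_informative (exists n, f n = Some m) with
  | left H => Some (proj1_sig (constructive_indefinite_description _ H))
  | right _ => None
  end.

Lemma inv_pinj f : pinj (inv_fun f).
Proof.
  unfold pinj, inv_fun; intros x y z Hx Hy.
  destruct (excluded_middle_informative _) as [H1|]; [|discriminate].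
  destruct (excluded_middle_informative _) as [H2|]; [|discriminate].
  destruct (constructive_indefinite_description _ H1) as [a Ha].
  destruct (constructive_indefinite_description _ H2) as [b Hb].
  simpl in *. injection Hx; injection Hy; intros; subst.
  rewrite Ha in Hb. now injection Hb.
Qed.

Definition pinv (f : IN) : IN := exist _ (inv_fun (proj1_sig f)) (inv_pinj _).

(** Codes for the subbasic sets v(x,y), w1(x), w2(y). *)
Inductive subbasic := SV (x y : nat) | SW1 (x : nat) | SW2 (y : nat).

Definition sb_set (s : subbasic) (f : IN) : Prop :=
  match s with
  | SV x y => app f x = Some y
  | SW1 x => app f x = None
  | SW2 y => ~ in_im f y
  end.

Definition tau_pp_open (U : IN -> Prop) : Prop :=
  forall f, U f -> exists l : list subbasic,
    List.Forall (fun s => sb_set s f) l /\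
    (forall g, List.Forall (fun s => sb_set s g) l -> U g).

Definition a_fg (f g : IN) (n : nat) : R :=
  match app f n, app g n with
  | Some _, Some _ => 0
  | None, None => 0
  | _, _ => 1
  end.

Definition b_fg (f g : IN) (n : nat) : R :=
  match app f n, app g n with
  | Some u, Some v => Rmin 1 (Rabs (INR u - INR v))
  | _, _ => 0
  end.

Definition rho (f g : IN) : R :=
  Series (fun n => (a_fg f g n + b_fg f g n) / 2 ^ n).

Definition rho_star (f g : IN) : R := rho (pinv f) (pinv g).

Definition dmet (f g : IN) : R := rho f g + rho_star f g.

Definition is_metric {X : Type} (d : X -> X -> R) : Prop :=
  (forall x y, 0 <= d x y) /\
  (forall x y, d x y = 0 <-> x = y) /\
  (forall x y, d x y = d y x) /\
  (forall x y z, d x z <= d x y + d y z).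

Definition metric_open {X : Type} (d : X -> X -> R) (U : X -> Prop) : Prop :=
  forall x, U x -> exists eps, 0 < eps /\ forall y, d x y < eps -> U y.

Definition compatible {X : Type} (d : X -> X -> R) (opn : (X -> Prop) -> Prop)
  : Prop := forall U, opn U <-> metric_open d U.

Definition complete_metric {X : Type} (d : X -> X -> R) : Prop :=
  forall u : nat -> X,
    (forall eps, 0 < eps -> exists N, forall m n, (N <= m)%nat -> (N <= n)%nat ->
        d (u m) (u n) < eps) ->
    exists l, forall eps, 0 < eps -> exists N, forall n, (N <= n)%nat ->
        d (u n) l < eps.

Definition separable {X : Type} (opn : (X -> Prop) -> Prop) : Prop :=
  exists s : nat -> X, forall U, opn U -> (exists x, U x) -> exists n, U (s n).

Definition polish {X : Type} (opn : (X -> Prop) -> Prop) : Prop :=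
  separable opn /\
  exists d : X -> X -> R, is_metric d /\ complete_metric d /\ compatible d opn.

Definition continuous2 {X : Type} (opn : (X -> Prop) -> Prop)
  (m : X -> X -> X) : Prop :=
  forall U, opn U -> forall x y, U (m x y) ->
    exists V W, opn V /\ opn W /\ V x /\ W y /\
      forall x' y', V x' -> W y' -> U (m x' y').

Definition continuous1 {X : Type} (opn : (X -> Prop) -> Prop)
  (i : X -> X) : Prop :=
  forall U, opn U -> opn (fun x => U (i x)).

Definition topological_inverse_semigroup {X : Type}
  (opn : (X -> Prop) -> Prop) (m : X -> X -> X) (i : X -> X) : Prop :=
  (forall x y z, m x (m y z) = m (m x y) z) /\
  (forall x, m (m x (i x)) x = x) /\
  (forall x, m (m (i x) x) (i x) = i x) /\
  (forall e e', m e e = e -> m e' e' = e' -> m e e' = m e' e) /\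
  continuous2 opn m /\ continuous1 opn i.

From Stdlib Require Import Reals Lra Lia Classical ClassicalEpsilon
  FunctionalExtensionality ProofIrrelevance.
From Stdlib Require List Cantor.
From Coquelicot Require Import Coquelicot.
Open Scope R_scope.
Local Open Scope list_scope.

(** At each coordinate n the summand of rho is a distance
    [odist] on option nat bounded by 1 and < 1 only for equal values, so
    rho f g is a weighted sum sum_n odist (f n) (g n) / 2^n.  Hence
      d f g < 1/2^N  ==>  f, g and f^{-1}, g^{-1} agree on [0,N]  ==>  d f g <= 2/2^N,
    i.e. the d-balls are squeezed between the "agreement sets" [agree N f].
    A basic set of tau_pp only constrains f and f^{-1} below some index and
    every agreement set is itself basic, which gives compatibility.  A
    d-Cauchy sequence stabilises coordinatewise (for f and for f^{-1}); its
    coordinatewise limit is a partial bijection and the d-limit, giving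
    completeness.  The truncations of elements to initial segments are
    countably many and meet every basic set, giving separability.  The
    inverse semigroup laws are checked pointwise, and continuity of
    composition and inversion is checked on subbasic sets. *)

Lemma IN_ext (f g : IN) : (forall n, app f n = app g n) -> f = g.
Proof.
  destruct f as [f pf], g as [g pg]; unfold app; simpl; intros H.
  assert (f = g) by (apply functional_extensionality; auto). subst.
  f_equal; apply proof_irrelevance.
Qed.

Lemma inv_spec (f : IN) m n : app (pinv f) m = Some n <-> app f n = Some m.
Proof.
  unfold app, pinv; simpl; unfold inv_fun.
  destruct (excluded_middle_informative _) as [H|H].
  - destruct (constructive_indefinite_description _ H) as [a Ha]; simpl.
    split; intro E.
    + injection E; intros; subst; auto.
    + f_equal. eapply (proj2_sig f); eauto.
  - split; intro E; [discriminate|]. exfalso; apply H; eauto.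
Qed.

Lemma inv_none (f : IN) m : app (pinv f) m = None <-> ~ in_im f m.
Proof.
  unfold in_im; split.
  - intros E [n Hn]. apply inv_spec in Hn. congruence.
  - intros H. destruct (app (pinv f) m) as [n|] eqn:E; auto.
    exfalso; apply H. exists n. apply inv_spec; auto.
Qed.

Lemma option_ext (X Y : option nat) :
  (forall n, X = Some n <-> Y = Some n) -> X = Y.
Proof.
  intros H; destruct X as [x|], Y as [y|]; auto.
  - apply H; auto.
  - symmetry; apply H; auto.
  - apply H; auto.
Qed.

Definition odist (o1 o2 : option nat) : R :=
  match o1, o2 with
  | Some u, Some v => Rmin 1 (Rabs (INR u - INR v))
  | None, None => 0
  | _, _ => 1
  end.

Lemma coord_odist f g n : a_fg f g n + b_fg f g n = odist (app f n) (app g n).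
Proof. unfold a_fg, b_fg, odist; destruct (app f n), (app g n); ring. Qed.

Lemma truncated_dist_bounds x : 0 <= Rmin 1 (Rabs x) <= 1.
Proof. split; [apply Rmin_glb; [lra | apply Rabs_pos] | apply Rmin_l]. Qed.

Lemma truncated_dist_tri (a b c : R) :
  Rmin 1 (Rabs (a - c)) <= Rmin 1 (Rabs (a - b)) + Rmin 1 (Rabs (b - c)).
Proof.
  assert (Rabs (a - c) <= Rabs (a - b) + Rabs (b - c)).
  { replace (a - c) with ((a - b) + (b - c)) by ring. apply Rabs_triang. }
  pose proof (Rabs_pos (a - b)); pose proof (Rabs_pos (b - c)).
  unfold Rmin; repeat destruct Rle_dec; lra.
Qed.

Lemma odist_bounds o1 o2 : 0 <= odist o1 o2 <= 1.
Proof.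
  destruct o1, o2; cbn [odist]; try lra. apply truncated_dist_bounds.
Qed.

Lemma odist_refl o : odist o o = 0.
Proof.
  destruct o as [u|]; cbn [odist]; auto.
  rewrite Rminus_diag, Rabs_R0. apply Rmin_right; lra.
Qed.

Lemma odist_sym o1 o2 : odist o1 o2 = odist o2 o1.
Proof. destruct o1, o2; cbn [odist]; auto. now rewrite Rabs_minus_sym. Qed.

Lemma odist_tri o1 o2 o3 : odist o1 o3 <= odist o1 o2 + odist o2 o3.
Proof.
  pose proof (odist_bounds o1 o2); pose proof (odist_bounds o2 o3).
  pose proof (odist_bounds o1 o3).
  destruct o1, o2, o3; cbn [odist] in *; try lra. apply truncated_dist_tri.
Qed.

(** Values are natural numbers, so distance < 1 forces equality. *)
Lemma odist_lt1 o1 o2 : odist o1 o2 < 1 -> o1 = o2.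
Proof.
  destruct o1 as [u|], o2 as [v|]; cbn [odist]; try lra; auto.
  intros H. destruct (Nat.lt_trichotomy u v) as [h|[h|h]]; [exfalso| now subst | exfalso].
  - assert (INR (S u) <= INR v) by (apply le_INR; lia). rewrite S_INR in *.
    rewrite Rabs_left1 in H by lra. unfold Rmin in H; destruct Rle_dec; lra.
  - assert (INR (S v) <= INR u) by (apply le_INR; lia). rewrite S_INR in *.
    rewrite Rabs_right in H by lra. unfold Rmin in H; destruct Rle_dec; lra.
Qed.

Definition wsum (c : nat -> R) : R := Series (fun n => c n / 2 ^ n).

Definition unit_bounded (c : nat -> R) : Prop := forall n, 0 <= c n <= 1.

Lemma inv_pow2_pos n : 0 < / 2 ^ n.
Proof. apply Rinv_0_lt_compat, pow_lt; lra. Qed.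

Lemma series_tail_geom m : Series (fun k => / 2 ^ (m + k)) = 2 / 2 ^ m.
Proof.
  rewrite (Series_ext _ (fun k => / 2 ^ m * (/ 2) ^ k)).
  2:{ intros k. rewrite pow_add, pow_inv, Rinv_mult; reflexivity. }
  rewrite Series_scal_l, Series_geom by (rewrite Rabs_pos_eq; lra).
  field. apply pow_nonzero; lra.
Qed.

Lemma ex_series_geom_half : ex_series (fun n => / 2 ^ n).
Proof.
  apply (ex_series_ext (fun n => (/ 2) ^ n)); [intros; apply pow_inv|].
  apply ex_series_geom. rewrite Rabs_pos_eq; lra.
Qed.

Lemma series_zero : Series (fun _ => 0) = 0.
Proof.
  rewrite (Series_ext _ (fun _ => 0 * 0)) by (intros; ring).
  rewrite Series_scal_l; ring.
Qed.

Section WeightedSums.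

Variable c : nat -> R.
Hypothesis c_bounded : unit_bounded c.

Lemma wsum_term_bounds n : 0 <= c n / 2 ^ n <= / 2 ^ n.
Proof.
  pose proof (c_bounded n); pose proof (inv_pow2_pos n). unfold Rdiv. nra.
Qed.

Lemma ex_wsum : ex_series (fun n => c n / 2 ^ n).
Proof.
  apply (@ex_series_le R_AbsRing R_CompleteNormedModule _ (fun n => / 2 ^ n));
    [intros n | apply ex_series_geom_half]. change (norm ?x) with (Rabs x).
  pose proof (wsum_term_bounds n). rewrite Rabs_pos_eq; lra.
Qed.

(** Each term is bounded by the whole sum (all terms are nonnegative). *)
Lemma wsum_ge_term n : c n / 2 ^ n <= wsum c.
Proof.
  unfold wsum. rewrite (Series_incr_n _ (S n)) by (lia || apply ex_wsum).
  simpl Init.Nat.pred.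
  assert (c n / 2 ^ n <= sum_f_R0 (fun k => c k / 2 ^ k) n).
  { destruct n as [|n]; simpl; [lra|].
    pose proof (cond_pos_sum (fun k => c k / 2 ^ k) n
                  (fun k => proj1 (wsum_term_bounds k))); lra. }
  assert (0 <= Series (fun k => c (S n + k)%nat / 2 ^ (S n + k))).
  { rewrite <- series_zero. apply Series_le.
    { intros k; split; [lra | apply wsum_term_bounds]. }
    apply (ex_series_incr_n (fun k => c k / 2 ^ k)), ex_wsum. }
  lra.
Qed.

Lemma wsum_nonneg : 0 <= wsum c.
Proof. pose proof (wsum_ge_term 0); pose proof (wsum_term_bounds 0); lra. Qed.

Lemma wsum_tail N : (forall n, (n <= N)%nat -> c n = 0) -> wsum c <= / 2 ^ N.
Proof.
  intros Hz. unfold wsum.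
  rewrite (Series_incr_n_aux _ (S N)).
  2:{ intros k Hk. rewrite Hz by lia. unfold Rdiv; ring. }
  replace (/ 2 ^ N) with (2 / 2 ^ S N) by (simpl; field; apply pow_nonzero; lra).
  rewrite <- series_tail_geom. apply Series_le.
  - intros k; apply wsum_term_bounds.
  - apply (ex_series_incr_n (fun n => / 2 ^ n)), ex_series_geom_half.
Qed.

End WeightedSums.

Lemma wsum_ext c c' : (forall n, c n = c' n) -> wsum c = wsum c'.
Proof. intros H; unfold wsum; apply Series_ext; intros n; now rewrite H. Qed.

Lemma wsum_zero : wsum (fun _ => 0) = 0.
Proof.
  unfold wsum. transitivity (Series (fun _ : nat => 0)); [|apply series_zero].
  apply Series_ext; intros n; unfold Rdiv; ring.
Qed.

Lemma wsum_subadd c1 c2 c3 :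
  unit_bounded c1 -> unit_bounded c2 -> unit_bounded c3 ->
  (forall n, c1 n <= c2 n + c3 n) -> wsum c1 <= wsum c2 + wsum c3.
Proof.
  intros B1 B2 B3 H. unfold wsum. rewrite <- Series_plus by (apply ex_wsum; auto).
  apply Series_le.
  - intros n; split; [apply wsum_term_bounds; auto|].
    pose proof (H n); pose proof (inv_pow2_pos n). unfold Rdiv. nra.
  - apply (@ex_series_plus R_AbsRing R_NormedModule); apply ex_wsum; auto.
Qed.

Definition seq_dist (u v : nat -> option nat) : R :=
  wsum (fun n => odist (u n) (v n)).

Lemma dmet_seq_dist f g :
  dmet f g = seq_dist (app f) (app g) + seq_dist (app (pinv f)) (app (pinv g)).
Proof.
  unfold dmet, rho_star, rho, seq_dist, wsum.
  f_equal; apply Series_ext; intros n; now rewrite coord_odist.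
Qed.

Lemma odist_bounded (u v : nat -> option nat) :
  unit_bounded (fun n => odist (u n) (v n)).
Proof. intros n; apply odist_bounds. Qed.

Section SeqDist.

Variables u v w : nat -> option nat.

Lemma seq_dist_nonneg : 0 <= seq_dist u v.
Proof. apply wsum_nonneg, odist_bounded. Qed.

Lemma seq_dist_refl : seq_dist u u = 0.
Proof.
  unfold seq_dist. rewrite <- wsum_zero. apply wsum_ext; intros; apply odist_refl.
Qed.

Lemma seq_dist_sym : seq_dist u v = seq_dist v u.
Proof. apply wsum_ext; intros; apply odist_sym. Qed.

Lemma seq_dist_tri : seq_dist u w <= seq_dist u v + seq_dist v w.
Proof. apply wsum_subadd; try apply odist_bounded. intros; apply odist_tri. Qed.

Lemma seq_dist_small N : seq_dist u v < / 2 ^ N -> forall n, (n <= N)%nat -> u n = v n.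
Proof.
  intros H n Hn. apply odist_lt1.
  pose proof (wsum_ge_term _ (odist_bounded u v) n) as Hterm.
  fold (seq_dist u v) in Hterm. unfold Rdiv in Hterm.
  assert (/ 2 ^ N <= / 2 ^ n).
  { apply Rinv_le_contravar; [apply pow_lt; lra | apply Rle_pow; [lra | auto]]. }
  pose proof (inv_pow2_pos n).
  apply Rmult_lt_reg_r with (/ 2 ^ n); auto. lra.
Qed.

Lemma seq_dist_agree N : (forall n, (n <= N)%nat -> u n = v n) -> seq_dist u v <= / 2 ^ N.
Proof.
  intros H. apply wsum_tail; [apply odist_bounded|].
  intros n Hn. rewrite H by auto. apply odist_refl.
Qed.

End SeqDist.

(** f and g agree up to N: f and g, and also f^{-1} and g^{-1}, coincide on [0,N].
    The balls of d are squeezed between such agreement sets. *)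
Definition agree (N : nat) (f g : IN) : Prop := forall n, (n <= N)%nat ->
  app f n = app g n /\ app (pinv f) n = app (pinv g) n.

Lemma dmet_small f g N : dmet f g < / 2 ^ N -> agree N f g.
Proof.
  rewrite dmet_seq_dist. intros H n Hn.
  pose proof (seq_dist_nonneg (app f) (app g)).
  pose proof (seq_dist_nonneg (app (pinv f)) (app (pinv g))).
  split; eapply seq_dist_small; eauto; lra.
Qed.

Lemma dmet_agree f g N : agree N f g -> dmet f g <= 2 / 2 ^ N.
Proof.
  intros H. rewrite dmet_seq_dist.
  pose proof (seq_dist_agree (app f) (app g) N (fun n Hn => proj1 (H n Hn))).
  pose proof (seq_dist_agree (app (pinv f)) (app (pinv g)) N (fun n Hn => proj2 (H n Hn))).
  unfold Rdiv; lra.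
Qed.

Lemma pow2_small eps : 0 < eps -> exists N, 2 / 2 ^ N < eps.
Proof.
  intros He. destruct (pow_lt_1_zero (/ 2) ltac:(rewrite Rabs_pos_eq; lra) (eps / 2))
    as [N HN]; [lra|].
  exists N. specialize (HN N (le_n N)). rewrite pow_inv, Rabs_pos_eq in HN.
  - unfold Rdiv in *; lra.
  - apply Rlt_le, inv_pow2_pos.
Qed.

Lemma dmet_metric : is_metric dmet.
Proof.
  split; [|split; [|split]]; intros; rewrite ?dmet_seq_dist.
  - pose proof (seq_dist_nonneg (app x) (app y)).
    pose proof (seq_dist_nonneg (app (pinv x)) (app (pinv y))); lra.
  - split; [intros H | intros ->; rewrite !seq_dist_refl; ring].
    apply IN_ext; intros n. apply (dmet_small x y n); [|lia].
    rewrite dmet_seq_dist, H. apply inv_pow2_pos.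
  - now rewrite (seq_dist_sym (app x)), (seq_dist_sym (app (pinv x))).
  - pose proof (seq_dist_tri (app x) (app y) (app z)).
    pose proof (seq_dist_tri (app (pinv x)) (app (pinv y)) (app (pinv z))); lra.
Qed.

Definition basic (l : list subbasic) (g : IN) : Prop :=
  List.Forall (fun s => sb_set s g) l.

Lemma basic_open l : tau_pp_open (basic l).
Proof. intros f H. exists l; split; auto. Qed.

Lemma basic_nil f : basic nil f.
Proof. constructor. Qed.

Lemma basic_single s f : basic (s :: nil) f <-> sb_set s f.
Proof.
  unfold basic; split; intros H; [now inversion H | now constructor].
Qed.

Lemma basic_app l1 l2 f : basic (l1 ++ l2) f <-> basic l1 f /\ basic l2 f.
Proof. apply List.Forall_app. Qed.

Definition sb_index (s : subbasic) : nat :=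
  match s with SV x y => Nat.max x y | SW1 x => x | SW2 y => y end.

Definition list_index (l : list subbasic) : nat :=
  List.fold_right (fun s a => Nat.max (sb_index s) a) 0%nat l.

Lemma list_index_ge l s : List.In s l -> (sb_index s <= list_index l)%nat.
Proof.
  induction l as [|t l IH]; simpl; [tauto|].
  intros [->|H]; [lia|]. specialize (IH H); lia.
Qed.

Lemma sb_set_agree s f g N :
  (sb_index s <= N)%nat -> agree N f g -> sb_set s f -> sb_set s g.
Proof.
  intros Hi A; destruct s as [x y|x|y]; cbn [sb_set sb_index] in *.
  - destruct (A x) as [E _]; [lia|]. congruence.
  - destruct (A x) as [E _]; [lia|]. congruence.
  - rewrite <- !inv_none. destruct (A y) as [_ E]; [lia|]. congruence.
Qed.

Lemma basic_agree l f g N :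
  (list_index l <= N)%nat -> agree N f g -> basic l f -> basic l g.
Proof.
  unfold basic; intros Hb A. rewrite !List.Forall_forall. intros H s Hs.
  apply (sb_set_agree s f g N); auto. pose proof (list_index_ge l s Hs); lia.
Qed.

(** Conversely, "agreeing with f up to N" is itself a basic open set:
    it fixes the value (or undefinedness) of f and of f^{-1} at each n <= N. *)
Definition agree_list (f : IN) (N : nat) : list subbasic :=
  List.flat_map (fun n =>
    (match app f n with Some y => SV n y | None => SW1 n end) ::
    (match app (pinv f) n with Some x => SV x n | None => SW2 n end) :: nil)
    (List.seq 0 (S N)).

Lemma agree_list_spec f g N : basic (agree_list f N) g <-> agree N f g.
Proof.
  unfold basic, agree_list. rewrite List.Forall_forall. split.
  - intros H n Hn.
    assert (Hin : forall s, List.In s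
        ((match app f n with Some y => SV n y | None => SW1 n end) ::
         (match app (pinv f) n with Some x => SV x n | None => SW2 n end) :: nil) ->
        sb_set s g).
    { intros s Hs. apply H, List.in_flat_map. exists n.
      split; [apply List.in_seq; lia | exact Hs]. }
    pose proof (Hin _ (or_introl eq_refl)) as H1.
    pose proof (Hin _ (or_intror (or_introl eq_refl))) as H2.
    split.
    + destruct (app f n) eqn:E; cbn [sb_set] in H1; congruence.
    + destruct (app (pinv f) n) eqn:E; cbn [sb_set] in H2.
      * symmetry; apply inv_spec; auto.
      * symmetry; apply inv_none; auto.
  - intros A s Hs. apply List.in_flat_map in Hs as [n [Hn Hs]].
    apply List.in_seq in Hn. destruct (A n ltac:(lia)) as [E1 E2].
    destruct Hs as [<-|[<-|[]]].
    + destruct (app f n) eqn:E; cbn [sb_set]; congruence.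
    + destruct (app (pinv f) n) eqn:E; cbn [sb_set].
      * apply inv_spec; congruence.
      * apply inv_none; congruence.
Qed.

Lemma agree_refl N f : agree N f f.
Proof. intros n _; split; reflexivity. Qed.

Lemma dmet_compatible : compatible dmet tau_pp_open.
Proof.
  intros U; split.
  - intros HU f Hf. destruct (HU f Hf) as [l [Hl HlU]].
    exists (/ 2 ^ list_index l). split; [apply inv_pow2_pos|].
    intros g Hg. apply HlU, (basic_agree l f g (list_index l)); auto.
    apply dmet_small; auto.
  - intros HU f Hf. destruct (HU f Hf) as [eps [He H]].
    destruct (pow2_small eps He) as [N HN].
    exists (agree_list f N). split; [apply agree_list_spec, agree_refl|].
    intros g Hg. apply H. apply agree_list_spec, dmet_agree in Hg. lra.
Qed.

Definition dmet_cauchy (u : nat -> IN) : Prop :=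
  forall eps, 0 < eps -> exists N, forall m n, (N <= m)%nat -> (N <= n)%nat ->
    dmet (u m) (u n) < eps.

Lemma cauchy_modulus u : dmet_cauchy u ->
  exists M : nat -> nat, forall n k, (M n <= k)%nat -> agree n (u k) (u (M n)).
Proof.
  intros Hc.
  assert (HM : forall n, exists M, forall k, (M <= k)%nat -> agree n (u k) (u M)).
  { intros n. destruct (Hc (/ 2 ^ n) (inv_pow2_pos n)) as [M HM].
    exists M. intros k Hk. apply dmet_small, HM; lia. }
  exists (fun n => proj1_sig (constructive_indefinite_description _ (HM n))).
  intros n. exact (proj2_sig (constructive_indefinite_description _ (HM n))).
Qed.

Fixpoint max_upto (M : nat -> nat) (K : nat) : nat :=
  match K with 0%nat => M 0%nat | S k => Nat.max (M (S k)) (max_upto M k) end.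

Lemma max_upto_ge M K n : (n <= K)%nat -> (M n <= max_upto M K)%nat.
Proof.
  induction K; intros H; simpl.
  - replace n with 0%nat by lia; lia.
  - destruct (Nat.eq_dec n (S K)); [subst; lia|]. specialize (IHK ltac:(lia)); lia.
Qed.

Section Limit.

Variable u : nat -> IN.
Variable M : nat -> nat.
Hypothesis stable : forall n k, (M n <= k)%nat -> agree n (u k) (u (M n)).

Definition limit_fun (n : nat) : option nat := app (u (M n)) n.

Lemma stable_at n k : (M n <= k)%nat ->
  app (u k) n = limit_fun n /\ app (pinv (u k)) n = app (pinv (u (M n))) n.
Proof. intros Hk. apply (stable n k Hk); lia. Qed.

Lemma limit_pinj : pinj limit_fun.
Proof.
  intros x y z Hx Hy.
  set (k := Nat.max (M x) (M y)).
  destruct (stable_at x k) as [Ex _]; [lia|].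
  destruct (stable_at y k) as [Ey _]; [lia|].
  apply (proj2_sig (u k) x y z); fold (app (u k) x) (app (u k) y); congruence.
Qed.

Definition limit : IN := exist _ limit_fun limit_pinj.

Lemma limit_inv m : app (pinv limit) m = app (pinv (u (M m))) m.
Proof.
  apply option_ext; intros n. rewrite inv_spec.
  set (k := Nat.max (M n) (M m)).
  destruct (stable_at n k) as [En _]; [lia|].
  destruct (stable_at m k) as [_ Em]; [lia|].
  rewrite <- Em, inv_spec, En. reflexivity.
Qed.

Lemma limit_agree K k : (max_upto M K <= k)%nat -> agree K (u k) limit.
Proof.
  intros Hk n Hn. pose proof (max_upto_ge M K n Hn).
  destruct (stable_at n k) as [E1 E2]; [lia|].
  rewrite limit_inv. split; assumption.
Qed.

End Limit.

Lemma dmet_complete : complete_metric dmet.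
Proof.
  intros u Hc. destruct (cauchy_modulus u Hc) as [M stable].
  exists (limit u M stable). intros eps He.
  destruct (pow2_small eps He) as [K HK].
  exists (max_upto M K). intros k Hk.
  pose proof (dmet_agree _ _ _ (limit_agree u M stable K k Hk)). lra.
Qed.

Lemma app_pcomp f g n :
  app (pcomp f g) n = match app g n with Some m => app f m | None => None end.
Proof. reflexivity. Qed.

Lemma pcomp_assoc f g h : pcomp f (pcomp g h) = pcomp (pcomp f g) h.
Proof.
  apply IN_ext; intros n. rewrite !app_pcomp. now destruct (app h n).
Qed.

Lemma pcomp_inv_r f : pcomp (pcomp f (pinv f)) f = f.
Proof.
  apply IN_ext; intros n. rewrite !app_pcomp.
  destruct (app f n) as [m|] eqn:E; auto.
  rewrite app_pcomp, (proj2 (inv_spec f m n) E). auto.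
Qed.

Lemma pcomp_inv_l f : pcomp (pcomp (pinv f) f) (pinv f) = pinv f.
Proof.
  apply IN_ext; intros n. rewrite !app_pcomp.
  destruct (app (pinv f) n) as [m|] eqn:E; auto.
  rewrite app_pcomp, (proj1 (inv_spec f n m) E). auto.
Qed.

Lemma idempotent_id (e : IN) : pcomp e e = e -> forall x y, app e x = Some y -> y = x.
Proof.
  intros He x y Hx.
  assert (E : app (pcomp e e) x = app e x) by (rewrite He; auto).
  rewrite app_pcomp, Hx in E.
  symmetry; apply (proj2_sig e x y y); auto.
Qed.

Lemma idempotents_commute e e' :
  pcomp e e = e -> pcomp e' e' = e' -> pcomp e e' = pcomp e' e.
Proof.
  intros H H'. apply IN_ext; intros n. rewrite !app_pcomp.
  destruct (app e' n) as [m'|] eqn:E'; destruct (app e n) as [m|] eqn:E; auto.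
  - pose proof (idempotent_id e' H' _ _ E'); pose proof (idempotent_id e H _ _ E).
    subst. congruence.
  - pose proof (idempotent_id e' H' _ _ E'); subst; auto.
  - pose proof (idempotent_id e H _ _ E); subst; auto.
Qed.

Lemma pcomp_sb_cont s f g : sb_set s (pcomp f g) ->
  exists lf lg, basic lf f /\ basic lg g /\
    forall f' g', basic lf f' -> basic lg g' -> sb_set s (pcomp f' g').
Proof.
  destruct s as [x y|x|y]; cbn [sb_set]; rewrite ?app_pcomp.
  - (* (f o g)(x) = y: fix g(x) = m and f(m) = y *)
    destruct (app g x) as [m|] eqn:E; [|discriminate]. intros H.
    exists (SV m y :: nil), (SV x m :: nil). rewrite !basic_single; cbn [sb_set].
    repeat split; auto.
    intros f' g'. rewrite !basic_single; cbn [sb_set]. intros H1 H2.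
    rewrite app_pcomp, H2; auto.
  - (* x notin dom (f o g): either g(x) = m with m notin dom f, or x notin dom g *)
    destruct (app g x) as [m|] eqn:E; intros H.
    + exists (SW1 m :: nil), (SV x m :: nil). rewrite !basic_single; cbn [sb_set].
      repeat split; auto.
      intros f' g'. rewrite !basic_single; cbn [sb_set]. intros H1 H2.
      rewrite app_pcomp, H2; auto.
    + exists nil, (SW1 x :: nil). rewrite !basic_single; cbn [sb_set].
      repeat split; auto using basic_nil.
      intros f' g' _. rewrite !basic_single; cbn [sb_set]. intros H2.
      rewrite app_pcomp, H2; auto.
  - (* y notin im (f o g): either f(m) = y with m notin im g, or y notin im f *)
    intros H. destruct (classic (in_im f y)) as [[m Hm]|Hnot].
    + exists (SV m y :: nil), (SW2 m :: nil). rewrite !basic_single; cbn [sb_set].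
      repeat split; auto.
      * intros [n Hn]. apply H. exists n. rewrite app_pcomp, Hn; auto.
      * intros f' g'. rewrite !basic_single; cbn [sb_set]. intros H1 H2 [n Hn].
        rewrite app_pcomp in Hn. destruct (app g' n) as [k|] eqn:E; [|discriminate].
        assert (k = m) by (apply (proj2_sig f' k m y); auto). subst.
        apply H2; exists n; auto.
    + exists (SW2 y :: nil), nil. rewrite !basic_single; cbn [sb_set].
      repeat split; auto using basic_nil.
      intros f' g'. rewrite !basic_single; cbn [sb_set]. intros H1 _ [n Hn].
      rewrite app_pcomp in Hn. destruct (app g' n) as [k|]; [|discriminate].
      apply H1; exists k; auto.
Qed.

Lemma pcomp_basic_cont l f g : basic l (pcomp f g) ->
  exists lf lg, basic lf f /\ basic lg g /\
    forall f' g', basic lf f' -> basic lg g' -> basic l (pcomp f' g').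
Proof.
  induction l as [|s l IH]; intros H.
  - exists nil, nil; repeat split; intros; apply basic_nil.
  - inversion H as [|? ? Hs Hl]; subst.
    destruct (pcomp_sb_cont s f g Hs) as [lf1 [lg1 [A1 [B1 C1]]]].
    destruct (IH Hl) as [lf2 [lg2 [A2 [B2 C2]]]].
    exists (lf1 ++ lf2), (lg1 ++ lg2). rewrite !basic_app. repeat split; auto.
    intros f' g'. rewrite !basic_app. intros [] [].
    constructor; [apply C1 | apply (C2 f' g')]; auto.
Qed.

Lemma pcomp_continuous : continuous2 tau_pp_open pcomp.
Proof.
  intros U HU f g Hfg. destruct (HU _ Hfg) as [l [Hl HlU]].
  destruct (pcomp_basic_cont l f g Hl) as [lf [lg [A [B C]]]].
  exists (basic lf), (basic lg).
  repeat split; auto using basic_open.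
  intros f' g' Hf' Hg'. apply HlU, C; auto.
Qed.

Definition sb_transpose (s : subbasic) : subbasic :=
  match s with SV x y => SV y x | SW1 x => SW2 x | SW2 y => SW1 y end.

Lemma sb_transpose_spec s h : sb_set (sb_transpose s) h <-> sb_set s (pinv h).
Proof.
  destruct s as [x y|x|y]; cbn [sb_transpose sb_set].
  - rewrite inv_spec; tauto.
  - rewrite inv_none; tauto.
  - unfold in_im. split.
    + intros H [n Hn]. apply (proj1 (inv_spec h n y)) in Hn. congruence.
    + intros H. destruct (app h y) as [n|] eqn:E; auto.
      exfalso; apply H. exists n. apply inv_spec; auto.
Qed.

Lemma basic_transpose l h : basic (List.map sb_transpose l) h <-> basic l (pinv h).
Proof.
  induction l as [|s l IH]; simpl.
  - split; intros; apply basic_nil.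
  - unfold basic in *. rewrite !List.Forall_cons_iff, IH, sb_transpose_spec. tauto.
Qed.

Lemma pinv_continuous : continuous1 tau_pp_open pinv.
Proof.
  intros U HU f Hf. destruct (HU _ Hf) as [l [Hl HlU]].
  exists (List.map sb_transpose l). split.
  - apply basic_transpose; auto.
  - intros g Hg. apply HlU, basic_transpose; auto.
Qed.

Definition oenc (o : option nat) : nat := match o with None => 0%nat | Some m => S m end.
Definition odec (n : nat) : option nat := match n with 0%nat => None | S m => Some m end.

Fixpoint enc (l : list (option nat)) : nat :=
  match l with nil => 0%nat | x :: l => S (Cantor.to_nat (oenc x, enc l)) end.

Fixpoint dec (fuel n : nat) : list (option nat) :=
  match fuel, n with
  | S k, S n' => let (a, b) := Cantor.of_nat n' in odec a :: dec k b
  | _, _ => nil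
  end.

Lemma dec_enc l : forall k, (enc l <= k)%nat -> dec k (enc l) = l.
Proof.
  induction l as [|x l IH]; intros k Hk.
  - destruct k; reflexivity.
  - cbn [enc] in *. destruct k as [|k]; [lia|]. cbn [dec].
    rewrite Cantor.cancel_of_to.
    pose proof (Cantor.to_nat_non_decreasing (oenc x) (enc l)).
    rewrite IH by lia. destruct x; reflexivity.
Qed.

Definition lfun (L : list (option nat)) (n : nat) : option nat := List.nth n L None.

Lemma lfun_prefix (u : nat -> option nat) N n :
  lfun (List.map u (List.seq 0 N)) n = if (n <? N)%nat then u n else None.
Proof.
  unfold lfun. destruct (Nat.ltb_spec n N).
  - rewrite (List.nth_indep _ None (u 0%nat))
      by (rewrite List.length_map, List.length_seq; lia).
    rewrite List.map_nth, List.seq_nth by lia. reflexivity.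
  - apply List.nth_overflow. rewrite List.length_map, List.length_seq; lia.
Qed.

Lemma pinj_empty : pinj (fun _ => None).
Proof. intros x y z H; discriminate. Qed.

Definition finite_map (k : nat) : IN :=
  match excluded_middle_informative (pinj (lfun (dec k k))) with
  | left H => exist _ _ H
  | right _ => exist _ _ pinj_empty
  end.

Lemma finite_map_enc L : pinj (lfun L) -> forall n, app (finite_map (enc L)) n = lfun L n.
Proof.
  intros pL n. unfold finite_map. rewrite dec_enc by lia.
  destruct (excluded_middle_informative _); [reflexivity | contradiction].
Qed.

Lemma basic_truncation l f (g : IN) :
  (forall n, app g n = if (n <? S (list_index l))%nat then app f n else None) ->
  basic l f -> basic l g.
Proof.
  unfold basic. rewrite !List.Forall_forall. intros Hg Hf s Hs.
  pose proof (list_index_ge l s Hs) as Hi. specialize (Hf s Hs).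
  destruct s as [x y|x|y]; cbn [sb_set sb_index] in *.
  - rewrite Hg. destruct (Nat.ltb_spec x (S (list_index l))); [auto | lia].
  - rewrite Hg. now destruct (x <? S (list_index l))%nat.
  - intros [n Hn]. apply Hf. exists n. rewrite Hg in Hn.
    destruct (n <? S (list_index l))%nat; congruence.
Qed.

Lemma tau_pp_separable : separable tau_pp_open.
Proof.
  exists finite_map. intros U HU [f Hf]. destruct (HU f Hf) as [l [Hl HlU]].
  set (L := List.map (app f) (List.seq 0 (S (list_index l)))).
  assert (HL : forall n, lfun L n = if (n <? S (list_index l))%nat then app f n else None)
    by (intros; apply lfun_prefix).
  assert (pL : pinj (lfun L)).
  { intros x y z Hx Hy. rewrite !HL in *.
    destruct (x <? _)%nat, (y <? _)%nat; try discriminate.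
    apply (proj2_sig f x y z); auto. }
  exists (enc L). apply HlU, (basic_truncation l f); auto.
  intros n. rewrite finite_map_enc; auto.
Qed.

Theorem theorem4p4 :
  polish tau_pp_open /\
  topological_inverse_semigroup tau_pp_open pcomp pinv /\
  is_metric dmet /\ complete_metric dmet /\ compatible dmet tau_pp_open.
Proof.
  assert (Hmetric : is_metric dmet /\ complete_metric dmet /\ compatible dmet tau_pp_open)
    by (split; [apply dmet_metric | split; [apply dmet_complete | apply dmet_compatible]]).
  split; [|split; [|exact Hmetric]].
  -
    split; [apply tau_pp_separable | exists dmet; exact Hmetric].
  -
    split; [apply pcomp_assoc|]. split; [apply pcomp_inv_r|].
    split; [apply pcomp_inv_l|]. split; [apply idempotents_commute|].
    split; [apply pcomp_continuous | apply pinv_continuous].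
Qed.
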